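(* With the notation of the context, let $f(g)$ be the number of $k$-tuples of nonnegative integers $[g_1,\dots,g_k]$ with $\sum_i g_i=g$ and $g_i\le\alpha_i g$ for all $i$. Then, as formal power series, \[ F(x)=\sum_{g=0}^\infty f(g)x^g=\frac{\sum_{\mathbf{a}\in\mathcal{A}}x^{b(\mathbf{a})}}{\prod_{i=1}^k\left(1-x^{N/n_i}\right)}. \]
   Context: Let $k\ge 2$ and let $\alpha_1,\dots,\alpha_k$ be nonnegative rational numbers such that the sum of any $k-1$ of them is at most $1$ and $\sum_i\alpha_i>1$. Write $\alpha_i=m_i/n_i$ in lowest terms with $n_i\ge 1$. Set $N=\prod_{i=1}^k n_i$, $A=N(\sum_{i=1}^k\alpha_i-1)$ (a positive integer), and $\hat\alpha_i=1-\sum_{j\ne i}\alpha_j$. Let $\mathcal{A}$ be the set of integer $k$-tuples $\mathbf{a}=(a_1,\dots,a_k)$ with $0\le a_i<A$ for all $i$ such that for every $1\le j\le k$ the integer $N\hat\alpha_j\frac{a_j}{n_j}+N\alpha_j\sum_{i\ne j}\frac{a_i}{n_i}$ is divisible by $A$. For $\mathbf{a}\in\mathcal{A}$ put $b(\mathbf{a})=\frac{N}{A}\sum_{i=1}^k\frac{a_i}{n_i}$ (a nonnegative integer). *)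

From HB Require Import structures.
From mathcomp Require Import all_boot all_order all_algebra.
Set Implicit Arguments. Unset Strict Implicit. Unset Printing Implicit Defensive.
Import Order.TTheory GRing.Theory Num.Theory.
Local Open Scope ring_scope.

Section Defs.
Variables (k : nat) (alpha : 'I_k -> rat).

Definition nq (i : 'I_k) : rat := (denq (alpha i))%:~R.
Definition nn (i : 'I_k) : nat := absz (denq (alpha i)).

Definition Nn : nat := (\prod_(i < k) nn i)%N.
Definition Nq : rat := Nn%:R.

(* A = N (sum alpha_i - 1), as a rational and as a nat (it is a positive integer) *)
Definition Aq : rat := Nq * (\sum_(i < k) alpha i - 1).
Definition An : nat := absz (numq Aq).

Definition alpha_hat (j : 'I_k) : rat := 1 - \sum_(i < k | i != j) alpha i.

Definition cond_expr (a : {ffun 'I_k -> 'I_An}) (j : 'I_k) : rat :=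
  Nq * alpha_hat j * ((a j)%:R / nq j)
  + Nq * alpha j * (\sum_(i < k | i != j) (a i)%:R / nq i).

Definition Aset : {set {ffun 'I_k -> 'I_An}} :=
  [set a | [forall j, (cond_expr a j / Aq) \is a Num.int]].

(* b(a) = (N/A) sum a_i / n_i, a nonnegative integer *)
Definition bexp (a : {ffun 'I_k -> 'I_An}) : nat :=
  absz (numq (Nq / Aq * \sum_(i < k) (a i)%:R / nq i)).

(* f(g) = #{ (g_1..g_k) in N^k : sum g_i = g, g_i <= alpha_i g } ;
   each g_i <= g, so it suffices to range over 'I_(g+1)^k *)
Definition fcount (g : nat) : nat :=
  #|[set t : {ffun 'I_k -> 'I_g.+1} |
      ((\sum_(i < k) (t i : nat))%N == g)
      && [forall i, ((t i : nat)%:R : rat) <= alpha i * g%:R]]|.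

Definition denom_poly : {poly int} := \prod_(i < k) (1 - 'X^(Nn %/ nn i)).
Definition numer_poly : {poly int} := \sum_(a in Aset) 'X^(bexp a).

End Defs.

From Pilot Require Import Defs.
From HB Require Import structures.
From mathcomp Require Import all_boot all_order all_algebra.
From mathcomp Require Import ring.
Import Order.TTheory GRing.Theory Num.Theory.
Set Implicit Arguments. Unset Strict Implicit. Unset Printing Implicit Defensive.
Local Open Scope ring_scope.

(* Write A = N (sum alpha_i - 1) and, for x in Q^k, beta(x) = (N/A) sum_i x_i / n_i
   and coord(x)_j = alpha_j beta(x) - x_j / n_j.  Call x a lattice point of height G if
   all coord(x)_j are integers and beta(x) = G.  The proof has three counting steps:
   1. [point G] : g |-> (n_j (alpha_j G - g_j))_j and [coord] are inverse bijections
      between the tuples counted by f(G) and the nonnegative lattice points of height G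
      (nonnegativity of coord uses that any k-1 of the alpha_i sum to at most 1);
   2. adding A to the coordinates in S raises the height by d_S = sum_(i in S) N/n_i
      and preserves lattice points, so the lattice points of height g with x_i >= A on
      S are counted by f(g - d_S);
   3. the lattice points of height g with all x_i < A are the a in \mathcal{A} with
      b(a) = g.
   Since the coefficient of x^j in prod_i (1 - x^(N/n_i)) is sum_S (-1)^|S| [d_S = j],
   inclusion-exclusion over S yields coefficientwise F(x) prod_i (1 - x^(N/n_i)) =
   sum_(a in \mathcal{A}) x^(b(a)). *)

Lemma card_set_bij (T U : finType) (P : pred T) (Q : pred U) (f : T -> U) (h : U -> T) :
  (forall x, P x -> Q (f x)) -> (forall y, Q y -> P (h y)) ->
  (forall x, P x -> h (f x) = x) -> (forall y, Q y -> f (h y) = y) ->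
  #|[set x | P x]| = #|[set y | Q y]|.
Proof.
move=> PQ QP fK hK.
rewrite -(card_in_imset (f := f) (D := [set x | P x])); last first.
  by move=> x1 x2; rewrite !inE => P1 P2 e; rewrite -(fK _ P1) -(fK _ P2) e.
apply: eq_card => y; rewrite inE; apply/imsetP/idP => [[x] | Qy].
  by rewrite inE => Px ->; apply: PQ.
by exists (h y); rewrite ?inE ?hK //; apply: QP.
Qed.

Lemma sum_sign_subsets (R : comPzRingType) (I : finType) (T : {set I}) :
  \sum_(S : {set I} | S \subset T) (-1) ^+ #|S| = (T == set0)%:R :> R.
Proof.
have expand := @bigA_distr R 0 1 *%R +%R I (fun i => if i \in T then -1 else 0) (fun=> 1).
simpl in expand; rewrite big_mkcond /=.
transitivity (\sum_(S : {set I})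
   \prod_i (if i \in S then (if i \in T then -1 else 0) else 1) : R).
  apply: eq_bigr => S _; rewrite -big_mkcond /=.
  case: (boolP (S \subset T)) => [sST | /subsetPn[i iS iT]].
    by rewrite -prodr_const; apply: eq_bigr => i iS; rewrite (subsetP sST).
  by rewrite (bigD1 i) //= (negbTE iT) mul0r.
rewrite -expand; have [->|[t tT]] := set_0Vmem T.
  by rewrite eqxx big1 // => i _; rewrite inE add0r.
have /negbTE-> : T != set0 by apply/set0Pn; exists t.
by rewrite (bigD1 t) //= tT addNr mul0r.
Qed.

Lemma inclusion_exclusion (R : comPzRingType) (X I : finType) (P : pred X) (T : X -> {set I}) :
  \sum_(S : {set I}) (-1) ^+ #|S| * #|[set x | P x & S \subset T x]|%:R
    = #|[set x | P x & T x == set0]|%:R :> R.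
Proof.
have card_sum (Q : pred X) : #|[set x | Q x]|%:R = \sum_x (Q x)%:R :> R.
  rewrite -sum1_card natr_sum big_mkcond /=.
  by apply: eq_bigr => x _; rewrite inE; case: (Q x).
rewrite card_sum; under eq_bigr => S _ do rewrite card_sum mulr_sumr.
rewrite exchange_big; apply: eq_bigr => x _ /=.
case: (P x) => /=; last by rewrite big1 // => S _; rewrite mulr0.
rewrite -(sum_sign_subsets R (T x)) [RHS]big_mkcond /=; apply: eq_bigr => S _.
by case: (S \subset T x); rewrite ?mulr1 ?mulr0.
Qed.

Lemma natq_numq (x : rat) : x \is a Num.nat -> (`|numq x|%N)%:R = x.
Proof.
rewrite natrEint => /andP[x_int x_ge0].
by rewrite -[RHS](numqK x_int) -[in RHS](gez0_abs (_ : 0 <= numq x)) ?numq_ge0.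
Qed.

Section LatticePoints.
Variable k : nat.
Local Notation vec := {ffun 'I_k -> rat}.

Definition ratv m (c : {ffun 'I_k -> 'I_m}) : vec := [ffun i => (c i)%:R].

Definition inbox m (x : vec) : bool :=
  [forall i, (x i \is a Num.nat) && (x i < m%:R)].

Definition boxv m (m_gt0 : (0 < m)%N) (x : vec) : {ffun 'I_k -> 'I_m} :=
  [ffun i => Ordinal (ltn_pmod `|numq (x i)| m_gt0)].

Lemma inbox_ratv m (c : {ffun 'I_k -> 'I_m}) : inbox m (ratv c).
Proof. by apply/forallP => i; rewrite ffunE natr_nat ltr_nat ltn_ord. Qed.

Lemma inbox_int m (x : vec) i : inbox m x -> x i \is a Num.int.
Proof. by move/forallP/(_ i)/andP => [/intr_nat]. Qed.

Lemma inbox_ge0 m (x : vec) i : inbox m x -> 0 <= x i.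
Proof. by move/forallP/(_ i)/andP => [/natr_ge0]. Qed.

Lemma inbox_lt m (x : vec) i : inbox m x -> x i < m%:R.
Proof. by move/forallP/(_ i)/andP => []. Qed.

Lemma ratv_ge0 m (c : {ffun 'I_k -> 'I_m}) i : 0 <= ratv c i.
Proof. exact: inbox_ge0 (inbox_ratv c). Qed.

Lemma inbox_intro m (x : vec) : (forall i, x i \is a Num.int) -> (forall i, 0 <= x i) ->
  (forall i, x i < m%:R) -> inbox m x.
Proof. by move=> x_int x_ge0 x_lt; apply/forallP => i; rewrite natrEint x_int x_ge0 x_lt. Qed.

Lemma ratv_boxv m (m_gt0 : (0 < m)%N) (x : vec) : inbox m x -> ratv (boxv m_gt0 x) = x.
Proof.
move=> /forallP x_in; apply/ffunP => i; have /andP[x_nat x_lt] := x_in i.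
by rewrite !ffunE /= modn_small ?natq_numq // -(ltr_nat rat) natq_numq.
Qed.

Lemma boxv_ratv m (m_gt0 : (0 < m)%N) (c : {ffun 'I_k -> 'I_m}) : boxv m_gt0 (ratv c) = c.
Proof.
apply/ffunP => i; apply: val_inj; rewrite !ffunE /=.
have -> : `|numq ((c i)%:R : rat)|%N = c i by apply/eqP; rewrite -(eqr_nat rat) natq_numq ?natr_nat.
by rewrite modn_small.
Qed.

Lemma card_lattice_bij m m' (m_gt0 : (0 < m)%N) (m'_gt0 : (0 < m')%N)
    (P Q : pred vec) (f h : vec -> vec) :
  (forall x, inbox m x -> P x -> inbox m' (f x) && Q (f x)) ->
  (forall y, inbox m' y -> Q y -> inbox m (h y) && P (h y)) ->
  (forall x, P x -> h (f x) = x) -> (forall y, Q y -> f (h y) = y) ->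
  #|[set c : {ffun 'I_k -> 'I_m} | P (ratv c)]| = #|[set c : {ffun 'I_k -> 'I_m'} | Q (ratv c)]|.
Proof.
move=> fPQ hQP fK hK.
apply: (card_set_bij (f := fun c => boxv m'_gt0 (f (ratv c)))
                     (h := fun c => boxv m_gt0 (h (ratv c)))).
- by move=> c Pc; have /andP[fc_in Qfc] := fPQ _ (inbox_ratv c) Pc; rewrite ratv_boxv.
- by move=> c Qc; have /andP[hc_in Phc] := hQP _ (inbox_ratv c) Qc; rewrite ratv_boxv.
- by move=> c Pc; have /andP[fc_in _] := fPQ _ (inbox_ratv c) Pc; rewrite ratv_boxv // fK // boxv_ratv.
- by move=> c Qc; have /andP[hc_in _] := hQP _ (inbox_ratv c) Qc; rewrite ratv_boxv // hK // boxv_ratv.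
Qed.

End LatticePoints.

Section Theorem8.
Variables (k : nat) (alpha : 'I_k -> rat).
Hypotheses (alpha_ge0 : forall i, 0 <= alpha i)
  (alpha_sub : forall j : 'I_k, \sum_(i < k | i != j) alpha i <= 1)
  (alpha_sum : 1 < \sum_(i < k) alpha i).

Local Notation vec := {ffun 'I_k -> rat}.
Local Notation nn := (nn alpha).
Local Notation nq := (nq alpha).
Local Notation Nn := (Nn alpha).
Local Notation Nq := (Nq alpha).
Local Notation Aq := (Aq alpha).
Local Notation An := (An alpha).
Local Notation ahat := (alpha_hat alpha).

Lemma nn_gt0 i : (0 < nn i)%N.
Proof. by rewrite absz_gt0 denq_neq0. Qed.

Lemma nqE i : nq i = (nn i)%:R.
Proof. by rewrite /Defs.nq -[in LHS](gez0_abs (ltW (denq_gt0 (alpha i)))). Qed.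

Lemma nq_gt0 i : 0 < nq i.
Proof. by rewrite nqE ltr0n nn_gt0. Qed.

Lemma nq_neq0 i : nq i != 0.
Proof. by rewrite gt_eqF ?nq_gt0. Qed.

Lemma nq_int i : nq i \is a Num.int.
Proof. by rewrite nqE natr_int. Qed.

Lemma nq_alpha_int i : nq i * alpha i \is a Num.int.
Proof. by rewrite mulrC -numqE intr_int. Qed.

(* [dexp l] is the integer N / n_l, the exponent of the l-th denominator factor. *)
Definition dexp (l : 'I_k) : nat := (\prod_(j < k | j != l) nn j)%N.

Lemma Nn_split l : Nn = (nn l * dexp l)%N.
Proof. by rewrite /Defs.Nn (bigD1 l). Qed.

Lemma dexp_gt0 l : (0 < dexp l)%N.
Proof. by apply: prodn_gt0 => j; apply: nn_gt0. Qed.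

Lemma dexp_div l : (Nn %/ nn l)%N = dexp l.
Proof. by rewrite (Nn_split l) mulKn ?nn_gt0. Qed.

Lemma Nq_split l : Nq = nq l * (dexp l)%:R.
Proof. by rewrite /Defs.Nq (Nn_split l) natrM nqE. Qed.

Lemma Nq_gt0 : 0 < Nq.
Proof. by rewrite /Defs.Nq ltr0n prodn_gt0 // => j; apply: nn_gt0. Qed.

Lemma Nq_neq0 : Nq != 0.
Proof. by rewrite gt_eqF ?Nq_gt0. Qed.

Lemma nq_le_Nq l : nq l <= Nq.
Proof. by rewrite nqE /Defs.Nq ler_nat (Nn_split l) leq_pmulr ?dexp_gt0. Qed.

(* n_i divides N / n_l when i <> l, so alpha_i * (N / n_l) is an integer. *)
Lemma alpha_dexp_int i l : i != l -> alpha i * (dexp l)%:R \is a Num.int.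
Proof.
move=> il; rewrite /dexp (bigD1 i) //= natrM mulrA -nqE (mulrC (alpha i)).
by rewrite rpredM ?nq_alpha_int ?natr_int.
Qed.

Lemma ahat_dexp_int l : ahat l * (dexp l)%:R \is a Num.int.
Proof.
rewrite /alpha_hat mulrBl mul1r mulr_suml rpredB ?natr_int //.
by apply: rpred_sum => i il; apply: alpha_dexp_int.
Qed.

Lemma ahat_ge0 j : 0 <= ahat j.
Proof. by rewrite subr_ge0. Qed.

Lemma Aq_gt0 : 0 < Aq.
Proof. by rewrite mulr_gt0 ?Nq_gt0 ?subr_gt0. Qed.

Lemma Aq_neq0 : Aq != 0.
Proof. by rewrite gt_eqF ?Aq_gt0. Qed.

Lemma sum_alpha_neq1 : \sum_i alpha i - 1 != 0.
Proof. by rewrite subr_eq0 gt_eqF. Qed.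

Lemma Aq_int : Aq \is a Num.int.
Proof.
rewrite /Defs.Aq mulrBr mulr1 rpredB ?natr_int // mulr_sumr rpred_sum // => i _.
by rewrite (Nq_split i) mulrAC rpredM ?nq_alpha_int ?natr_int.
Qed.

Lemma AnE : Aq = An%:R.
Proof. by rewrite natq_numq // natrEint Aq_int ltW ?Aq_gt0. Qed.

Lemma An_gt0 : (0 < An)%N.
Proof. by rewrite -(ltr0n rat) -AnE Aq_gt0. Qed.

Definition wsum (x : vec) : rat := \sum_i x i / nq i.
Definition beta (x : vec) : rat := Nq / Aq * wsum x.
Definition coord (x : vec) : vec := [ffun j => alpha j * beta x - x j / nq j].
Definition point (G : rat) (g : vec) : vec := [ffun j => nq j * (alpha j * G - g j)].
Definition admissible (x : vec) : bool := [forall j, coord x j \is a Num.int].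

Lemma NAq_ge0 : 0 <= Nq / Aq.
Proof. by rewrite divr_ge0 // ltW ?Nq_gt0 ?Aq_gt0. Qed.

Lemma betaD (x z : vec) : beta (x + z) = beta x + beta z.
Proof.
rewrite /beta /wsum -mulrDr -big_split /=; congr (_ * _).
by apply: eq_bigr => i _; rewrite ffunE mulrDl.
Qed.

Lemma coordD (x z : vec) : coord (x + z) = coord x + coord z.
Proof. by apply/ffunP => j; rewrite !ffunE betaD; ring. Qed.

(* coord x j is cond_expr / A, written with alpha_hat; all weights are >= 0. *)
Lemma coordE (x : vec) j : coord x j =
  Nq / Aq * (ahat j * (x j / nq j) + alpha j * \sum_(i < k | i != j) x i / nq i).
Proof.
have := sum_alpha_neq1; rewrite (bigD1 j) //= => hA.
rewrite ffunE /beta /wsum (bigD1 j) //= /alpha_hat /Defs.Aq [\sum_i alpha i](bigD1 j) //=.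
by field; rewrite nq_neq0 Nq_neq0 hA.
Qed.

Lemma sum_coord (x : vec) : \sum_j coord x j = beta x.
Proof.
under eq_bigr => j _ do rewrite ffunE.
rewrite sumrB -mulr_suml /beta -/(wsum x) /Defs.Aq.
by field; rewrite Nq_neq0 sum_alpha_neq1.
Qed.

Lemma beta_ge0 (x : vec) : (forall i, 0 <= x i) -> 0 <= beta x.
Proof.
move=> x_ge0; rewrite mulr_ge0 ?NAq_ge0 //.
by apply: sumr_ge0 => i _; rewrite divr_ge0 // ltW ?nq_gt0.
Qed.

(* This is where the hypothesis that any k-1 of the alpha_i sum to at most 1 enters. *)
Lemma coord_ge0 (x : vec) j : (forall i, 0 <= x i) -> 0 <= coord x j.
Proof.
move=> x_ge0; have q_ge0 i : 0 <= x i / nq i by rewrite divr_ge0 // ltW ?nq_gt0.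
rewrite coordE mulr_ge0 ?NAq_ge0 //.
by apply: addr_ge0; apply: mulr_ge0; rewrite ?ahat_ge0 ?q_ge0 ?sumr_ge0.
Qed.

Lemma coord_le_beta (x : vec) j : (forall i, 0 <= x i) -> coord x j <= beta x.
Proof.
move=> x_ge0; rewrite -sum_coord (bigD1 j) //= lerDl.
by apply: sumr_ge0 => i _; apply: coord_ge0.
Qed.

Lemma le_beta (x : vec) j : (forall i, 0 <= x i) -> x j <= Aq * beta x.
Proof.
move=> x_ge0; have q_ge0 i : 0 <= x i / nq i by rewrite divr_ge0 // ltW ?nq_gt0.
have -> : Aq * beta x = Nq * wsum x by rewrite /beta mulrA mulrCA divff ?Aq_neq0 ?mulr1.
have -> : x j = nq j * (x j / nq j) by rewrite mulrCA divff ?nq_neq0 ?mulr1.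
apply: ler_pM (ltW (nq_gt0 j)) (q_ge0 j) (nq_le_Nq j) _.
by rewrite /wsum (bigD1 j) //= lerDl sumr_ge0.
Qed.

Lemma beta_point (G : rat) (g : vec) : \sum_i g i = G -> beta (point G g) = G.
Proof.
move=> sum_g; rewrite /beta /wsum (eq_bigr (fun i => alpha i * G - g i)); last first.
  by move=> i _; rewrite ffunE mulrC mulKf ?nq_neq0.
rewrite sumrB -mulr_suml sum_g /Defs.Aq.
by field; rewrite Nq_neq0 sum_alpha_neq1.
Qed.

Lemma coord_point (G : rat) (g : vec) : \sum_i g i = G -> coord (point G g) = g.
Proof.
move=> sum_g; apply/ffunP => j.
by rewrite !ffunE beta_point // mulrAC divff ?nq_neq0 // mul1r opprB addrC subrK.
Qed.

Lemma point_coord (x : vec) : point (beta x) (coord x) = x.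
Proof.
apply/ffunP => j.
by rewrite !ffunE opprB addrC subrK mulrCA divff ?nq_neq0 ?mulr1.
Qed.

Lemma beta_int (x : vec) : admissible x -> beta x \is a Num.int.
Proof. by move/forallP => coord_int; rewrite -sum_coord rpred_sum. Qed.

Lemma point_int (G : nat) (g : vec) j : g j \is a Num.int -> point G%:R g j \is a Num.int.
Proof.
move=> g_int; rewrite ffunE mulrBr mulrA.
by apply: rpredB; apply: rpredM; rewrite ?nq_alpha_int ?nq_int ?natr_int.
Qed.

Definition shiftv (S : {set 'I_k}) : vec := [ffun j => (j \in S)%:R * Aq].
Definition dsum (S : {set 'I_k}) : nat := (\sum_(i in S) dexp i)%N.

Lemma beta_shift (S : {set 'I_k}) : beta (shiftv S) = (dsum S)%:R.
Proof.
rewrite /beta /wsum mulr_sumr /dsum natr_sum [RHS]big_mkcond /=.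
apply: eq_bigr => i _; rewrite ffunE; case: (i \in S); last by rewrite !mul0r mulr0.
by rewrite (Nq_split i) mul1r; field; rewrite nq_neq0 Aq_neq0.
Qed.

Lemma coord_shift_int (S : {set 'I_k}) j : coord (shiftv S) j \is a Num.int.
Proof.
have -> : coord (shiftv S) j = (j \in S)%:R * (ahat j * (dexp j)%:R)
    + \sum_(i < k | i != j) (i \in S)%:R * (alpha j * (dexp i)%:R).
  rewrite coordE mulrDr !mulr_sumr; congr (_ + _); last apply: eq_bigr => i _.
    by rewrite ffunE (Nq_split j); field; rewrite nq_neq0 Aq_neq0.
  by rewrite ffunE (Nq_split i); field; rewrite nq_neq0 Aq_neq0.
apply: rpredD; first by rewrite rpredM ?natr_int ?ahat_dexp_int.
apply: rpred_sum => i ij.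
by rewrite rpredM ?natr_int ?alpha_dexp_int // eq_sym.
Qed.

Lemma admissible_shift (x : vec) S : admissible (x + shiftv S) = admissible x.
Proof.
by apply: eq_forallb => j; rewrite coordD ffunE rpredDr ?coord_shift_int.
Qed.

Lemma beta_shiftD (x : vec) S : beta (x + shiftv S) = beta x + (dsum S)%:R.
Proof. by rewrite betaD beta_shift. Qed.

Definition simplexP (G : nat) (g : vec) : bool :=
  (\sum_i g i == G%:R) && [forall i, g i <= alpha i * G%:R].
Definition latticeP (G : nat) (x : vec) : bool := admissible x && (beta x == G%:R).
Definition high (x : vec) : {set 'I_k} := [set j | Aq <= x j].
(* Every lattice point of height at most g fits in this box (coordinates <= A g). *)
Definition box (g : nat) : nat := (An * g).+1.

Lemma fcountE G : fcount alpha G = #|[set t : {ffun 'I_k -> 'I_G.+1} | simplexP G (ratv t)]|.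
Proof.
apply: eq_card => t; rewrite !inE; congr (_ && _).
  by rewrite -(eqr_nat rat) natr_sum; under [in RHS]eq_bigr => i _ do rewrite ffunE.
by apply: eq_forallb => i; rewrite ffunE.
Qed.

Lemma le_box g (x : vec) j : (forall i, 0 <= x i) -> (beta x <= g%:R) -> x j < (box g)%:R.
Proof.
move=> x_ge0 beta_le; apply: (le_lt_trans (le_beta j x_ge0)).
rewrite /box -natr1 natrM -AnE.
by apply: (le_lt_trans (y := Aq * g%:R)); rewrite ?ltrDl // ler_pM2l ?Aq_gt0.
Qed.

Lemma card_simplex_lattice g G : (G <= g)%N ->
  #|[set t : {ffun 'I_k -> 'I_G.+1} | simplexP G (ratv t)]|
  = #|[set c : {ffun 'I_k -> 'I_(box g)} | latticeP G (ratv c)]|.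
Proof.
move=> le_Gg.
apply: (card_lattice_bij (ltn0Sn G) (ltn0Sn _) (f := point G%:R) (h := coord)).
- move=> t t_in /andP[/eqP sum_t /forallP t_le].
  have pt_ge0 i : 0 <= point G%:R t i.
    by rewrite ffunE (mulr_ge0 (ltW (nq_gt0 i))) // subr_ge0.
  rewrite /latticeP /admissible coord_point // beta_point // eqxx andbT.
  apply/andP; split; last by apply/forallP => i; apply: inbox_int t_in.
  apply: inbox_intro => i; [exact: point_int (inbox_int i t_in) | exact: pt_ge0 |].
  by apply: le_box pt_ge0 _; rewrite beta_point // ler_nat.
- move=> y y_in /andP[/forallP coord_int /eqP beta_y].
  have y_ge0 i : 0 <= y i := inbox_ge0 i y_in.
  rewrite /simplexP sum_coord beta_y eqxx /=; apply/andP; split.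
    apply: inbox_intro => i; [exact: coord_int | exact: coord_ge0 |].
    by apply: (le_lt_trans (coord_le_beta i y_ge0)); rewrite beta_y ltr_nat.
  apply/forallP => i; rewrite ffunE -beta_y lerBlDr lerDl.
  by rewrite divr_ge0 // ltW ?nq_gt0.
- by move=> t /andP[/eqP sum_t _]; apply: coord_point.
- by move=> y /andP[_ /eqP <-]; apply: point_coord.
Qed.

Lemma unshift_ge0 (y : vec) (S : {set 'I_k}) : (forall i, 0 <= y i) -> S \subset high y ->
  forall i, 0 <= (y - shiftv S) i.
Proof.
move=> y_ge0 /subsetP S_high i; rewrite !ffunE subr_ge0.
case: (boolP (i \in S)) => [iS | _]; last by rewrite mul0r.
by rewrite mul1r; have := S_high i iS; rewrite inE.
Qed.

Lemma card_lattice_high g (S : {set 'I_k}) :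
  #|[set c : {ffun 'I_k -> 'I_(box g)} | latticeP g (ratv c) & S \subset high (ratv c)]|
  = if (dsum S <= g)%N
    then #|[set c : {ffun 'I_k -> 'I_(box g)} | latticeP (g - dsum S) (ratv c)]| else 0%N.
Proof.
case: leqP => [le_dg | lt_gd]; last first.
  apply/eqP; rewrite cards_eq0; apply/eqP/setP => c; rewrite !inE.
  apply/negbTE/negP => /andP[/andP[_ /eqP beta_c] S_high].
  have := beta_ge0 (unshift_ge0 (ratv_ge0 c) S_high).
  rewrite -(lerD2r (dsum S)%:R) add0r -beta_shiftD subrK beta_c ler_nat.
  by rewrite leqNgt lt_gd.
symmetry; apply: (card_lattice_bij (ltn0Sn _) (ltn0Sn _) (P := latticeP (g - dsum S))
  (Q := fun x => latticeP g x && (S \subset high x)) (f := fun x => x + shiftv S) (h := fun y => y - shiftv S)).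
- move=> x x_in /andP[adm /eqP beta_x].
  have beta_xs : beta (x + shiftv S) = g%:R by rewrite beta_shiftD beta_x -natrD subnK.
  have xs_ge0 i : 0 <= (x + shiftv S) i.
    by rewrite !ffunE addr_ge0 ?(inbox_ge0 i x_in) // mulr_ge0 // ltW ?Aq_gt0.
  rewrite /latticeP admissible_shift adm beta_xs eqxx /=; apply/andP; split.
    apply: inbox_intro => i; [|exact: xs_ge0| by apply: le_box xs_ge0 _; rewrite beta_xs].
    by rewrite !ffunE rpredD ?(inbox_int i x_in) // rpredM ?natr_int ?Aq_int.
  by apply/subsetP => i iS; rewrite inE !ffunE iS mul1r lerDr (inbox_ge0 i x_in).
- move=> y y_in /andP[/andP[adm /eqP beta_y] S_high].
  have ys_ge0 := unshift_ge0 (fun i => inbox_ge0 i y_in) S_high.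
  have beta_ys : beta (y - shiftv S) = (g - dsum S)%:R.
    by apply/eqP; rewrite natrB // eq_sym subr_eq -beta_shiftD subrK beta_y.
  rewrite /latticeP -(admissible_shift _ S) subrK adm beta_ys eqxx !andbT.
  apply: inbox_intro => i; [|exact: ys_ge0|].
    by rewrite !ffunE rpredB ?(inbox_int i y_in) // rpredM ?natr_int ?Aq_int.
  apply: le_lt_trans (inbox_lt i y_in); rewrite !ffunE gerBl.
  by rewrite mulr_ge0 // ltW ?Aq_gt0.
- by move=> x _; rewrite addrK.
- by move=> y _; rewrite subrK.
Qed.

Lemma card_lattice_low g :
  #|[set c : {ffun 'I_k -> 'I_(box g)} | latticeP g (ratv c) & high (ratv c) == set0]|
  = #|[set a : {ffun 'I_k -> 'I_An} | latticeP g (ratv a)]|.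
Proof.
apply: (card_lattice_bij (ltn0Sn _) An_gt0 (P := fun x => latticeP g x && (high x == set0))
  (f := id) (h := id)) => //.
- move=> x x_in /andP[lat /eqP high0]; rewrite lat andbT.
  apply: inbox_intro => i; [exact: inbox_int x_in | exact: inbox_ge0 x_in |].
  rewrite -AnE ltNge; apply/negP => A_le; have : i \in high x by rewrite inE.
  by rewrite high0 inE.
- move=> y y_in lat; have /andP[_ /eqP beta_y] := lat; rewrite lat /=.
  have y_ge0 i : 0 <= y i := inbox_ge0 i y_in.
  apply/andP; split.
    apply: inbox_intro => i; [exact: inbox_int y_in | exact: y_ge0 |].
    by apply: le_box y_ge0 _; rewrite beta_y.
  apply/eqP/setP => i; rewrite !inE; apply/negbTE.
  by rewrite -ltNge AnE; apply: inbox_lt y_in.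
Qed.

Lemma cond_expr_coord (a : {ffun 'I_k -> 'I_An}) j : cond_expr a j / Aq = coord (ratv a) j.
Proof.
rewrite coordE /cond_expr ffunE.
under [in RHS]eq_bigr => i _ do rewrite ffunE.
by field; rewrite nq_neq0 Aq_neq0.
Qed.

Lemma Aset_lattice g : [set a in Aset alpha | bexp a == g] = [set a | latticeP g (ratv a)].
Proof.
apply/setP => a; rewrite !inE /latticeP.
have -> : [forall j, cond_expr a j / Aq \is a Num.int] = admissible (ratv a).
  by apply: eq_forallb => j; rewrite cond_expr_coord.
case: (boolP (admissible (ratv a))) => //= adm.
have betaE : beta (ratv a) = Nq / Aq * \sum_i (a i)%:R / nq i.
  by rewrite /beta /wsum; under eq_bigr => i _ do rewrite ffunE.
rewrite -(eqr_nat rat) /bexp -betaE natq_numq // natrEint beta_int //.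
by rewrite beta_ge0 // => i; apply: ratv_ge0.
Qed.

Lemma coef_numer g : (numer_poly alpha)`_g = #|[set a in Aset alpha | bexp a == g]|%:R.
Proof.
rewrite /numer_poly coef_sum -sum1_card natr_sum big_mkcond [RHS]big_mkcond /=.
apply: eq_bigr => a _; rewrite [in RHS]inE coefXn eq_sym.
by case: (a \in Aset alpha); case: (bexp a == g).
Qed.

Lemma denom_coef j :
  (denom_poly alpha)`_j = \sum_(S : {set 'I_k}) (-1) ^+ #|S| * (dsum S == j)%:R.
Proof.
have expand := @bigA_distr {poly int} 0 1 *%R +%R 'I_k (fun i => - 'X^(dexp i)) (fun=> 1).
simpl in expand.
rewrite /denom_poly (eq_bigr (fun i => - 'X^(dexp i) + 1)) => [|i _]; last first.
  by rewrite dexp_div addrC.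
rewrite expand coef_sum; apply: eq_bigr => S _; rewrite -big_mkcond /= prodrN prodrXr.
rewrite -/(dsum S) -[in LHS]signr_odd -[in RHS]signr_odd !mulr_sign.
by case: (odd #|S|); rewrite ?coefN coefXn eq_sym.
Qed.

Lemma generating_identity g :
  \sum_(j < g.+1) ((fcount alpha (g - j))%:R * (denom_poly alpha)`_j)
  = (numer_poly alpha)`_g.
Proof.
transitivity (\sum_(S : {set 'I_k}) (-1) ^+ #|S|
    * (if (dsum S < g.+1)%N then (fcount alpha (g - dsum S))%:R else 0) : int).
  under eq_bigr => j _ do rewrite denom_coef mulr_sumr.
  rewrite exchange_big; apply: eq_bigr => S _ /=.
  rewrite -(big_ord1_eq +%R (fun j => (fcount alpha (g - j))%:R : int) (dsum S) g.+1).
  rewrite mulr_sumr [RHS]big_mkcond /=; apply: eq_bigr => j _.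
  by rewrite (eq_sym (dsum S)); case: (j == dsum S :> nat); rewrite ?mulr1 ?mulr0 // mulrC.
transitivity (\sum_(S : {set 'I_k}) (-1) ^+ #|S| * #|[set c : {ffun 'I_k -> 'I_(box g)}
    | latticeP g (ratv c) & S \subset high (ratv c)]|%:R : int).
  apply: eq_bigr => S _; rewrite card_lattice_high ltnS; case: ifP => // le_dg.
  by rewrite fcountE (card_simplex_lattice (leq_subr _ _)).
by rewrite inclusion_exclusion card_lattice_low -Aset_lattice coef_numer.
Qed.

End Theorem8.

Theorem mainTheorem8 (k : nat) (alpha : 'I_k -> rat)
  (hk : (2 <= k)%N)
  (hnn : forall i, 0 <= alpha i)
  (hsub : forall j : 'I_k, \sum_(i < k | i != j) alpha i <= 1)
  (hsum : 1 < \sum_(i < k) alpha i) :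
  forall g : nat,
    \sum_(j < g.+1) ((fcount alpha (g - j))%:R * (denom_poly alpha)`_j)
    = (numer_poly alpha)`_g.
Proof. exact: generating_identity hnn hsub hsum. Qed.
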